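(* Let $\alpha:\mathbb{C}\to\mathbb{C}$ be an exponential automorphism, i.e. a function satisfying $\alpha(z_1+z_2)=\alpha(z_1)+\alpha(z_2)$ and $\alpha(e^z)=e^{\alpha(z)}$ for all $z,z_1,z_2\in\mathbb{C}$. Then for every positive rational number $t$ there is an integer $n=n(\alpha,t)$ such that $\alpha(\ln t)=\ln t+2\pi n i$.
   Context: Here $\ln t$ denotes the usual real-valued natural logarithm of the positive real number $t$. *)

From Stdlib Require Import Reals QArith.
From Coquelicot Require Import Coquelicot.
Open Scope R_scope.

Definition Cexp (z : C) : C :=
  (exp (Re z) * cos (Im z), exp (Re z) * sin (Im z)).

Definition exp_automorphism (alpha : C -> C) : Prop :=
  (forall z1 z2 : C, alpha (Cplus z1 z2) = Cplus (alpha z1) (alpha z2)) /\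
  (forall z : C, alpha (Cexp z) = Cexp (alpha z)).

(* An additive map of C is Q-linear, and alpha 1 = alpha (e^0) = e^(alpha 0) = 1, so alpha
   fixes every rational.  Hence e^(alpha (ln t)) = alpha (e^(ln t)) = alpha t = t, and
   alpha (ln t) differs from ln t by an element of the kernel of exp, which is 2 pi i Z. *)
From Stdlib Require Import Reals QArith Lra Psatz.
From Coquelicot Require Import Coquelicot.
Open Scope R_scope.

Section AdditiveMap.
Variable f : C -> C.
Hypothesis f_add : forall z1 z2 : C, f (Cplus z1 z2) = Cplus (f z1) (f z2).

Lemma additive_0 : f 0 = 0.
Proof.
  assert (H : f (0 + 0)%C = (f 0 + f 0)%C) by apply f_add.
  rewrite Cplus_0_l in H.
  replace (f 0) with (f 0 + f 0 - f 0)%C at 1 by ring.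
  rewrite <- H. ring.
Qed.

Lemma additive_opp (z : C) : f (- z)%C = (- f z)%C.
Proof.
  assert (H : f (z + - z)%C = (f z + f (- z))%C) by apply f_add.
  rewrite Cplus_opp_r, additive_0 in H.
  replace (f (- z)%C) with (f z + f (- z) - f z)%C by ring.
  rewrite <- H. ring.
Qed.

Lemma additive_natmul (n : nat) (z : C) : f (INR n * z)%C = (INR n * f z)%C.
Proof.
  induction n as [|n IH].
  - simpl. rewrite !Cmult_0_l. apply additive_0.
  - rewrite S_INR, !RtoC_plus.
    replace ((INR n + 1) * z)%C with (INR n * z + z)%C by ring.
    rewrite f_add, IH. ring.
Qed.

Lemma additive_Zmul (k : Z) (z : C) : f (IZR k * z)%C = (IZR k * f z)%C.
Proof.
  destruct k as [|p|p].
  - rewrite !Cmult_0_l. apply additive_0.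
  - rewrite <- Znat.positive_nat_Z, <- INR_IZR_INZ. apply additive_natmul.
  - rewrite <- Pos2Z.opp_pos, opp_IZR, <- Znat.positive_nat_Z, <- INR_IZR_INZ.
    replace (RtoC (- INR (Pos.to_nat p)) * z)%C with (- (INR (Pos.to_nat p) * z))%C
      by (unfold RtoC; apply injective_projections; simpl; ring).
    rewrite additive_opp, additive_natmul.
    unfold RtoC; apply injective_projections; simpl; ring.
Qed.

Lemma additive_Qmul (q : Q) (z : C) : f (Q2R q * z)%C = (Q2R q * f z)%C.
Proof.
  destruct q as [num den]; unfold Q2R; simpl.
  set (d := IZR (Z.pos den)).
  assert (d_neq0 : d <> 0) by (apply not_0_IZR; discriminate).
  assert (d_neq0_C : RtoC d <> 0%C) by (intro E; apply d_neq0, RtoC_inj, E).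
  rewrite RtoC_mult, RtoC_inv by exact d_neq0.
  assert (Hd : (d * f (IZR num * / d * z))%C = (IZR num * f z)%C).
  { unfold d; rewrite <- !additive_Zmul; fold d. f_equal. field. exact d_neq0_C. }
  replace (f (IZR num * / d * z)%C) with (/ d * (d * f (IZR num * / d * z)))%C
    by (field; exact d_neq0_C).
  rewrite Hd. field. exact d_neq0_C.
Qed.

End AdditiveMap.

Lemma Cexp_RtoC (r : R) : Cexp (RtoC r) = RtoC (exp r).
Proof.
  unfold Cexp, RtoC; simpl. rewrite cos_0, sin_0, Rmult_1_r, Rmult_0_r. reflexivity.
Qed.

Lemma cos_eq_1_2PI (x : R) : cos x = 1 -> exists k : Z, x = 2 * PI * IZR k.
Proof.
  intro Hx.
  assert (Hhalf : sin (x / 2) = 0).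
  { pose proof (cos_2a_sin (x / 2)) as C2.
    replace (2 * (x / 2)) with x in C2 by field.
    nra. }
  destruct (sin_eq_0_0 _ Hhalf) as [k Hk]. exists k.
  replace x with (2 * (x / 2)) by field. rewrite Hk. ring.
Qed.

Lemma Cexp_eq_pos_real (z : C) (r : R) :
  0 < r -> Cexp z = RtoC r ->
  exists k : Z, z = Cplus (RtoC (ln r)) ((0, 2 * PI * IZR k) : C).
Proof.
  intros r_pos Hz. destruct z as [a b].
  unfold Cexp, RtoC in Hz; simpl in Hz. injection Hz as Hre Him.
  pose proof (exp_pos a) as ea.
  assert (sin_b : sin b = 0) by nra.
  assert (cos_b : cos b = 1).
  { pose proof (sin2_cos2 b) as SC. rewrite sin_b in SC. unfold Rsqr in SC. nra. }
  destruct (cos_eq_1_2PI b cos_b) as [k Hk]. exists k.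
  rewrite cos_b, Rmult_1_r in Hre.
  unfold Cplus, RtoC; simpl. rewrite <- Hre, ln_exp, Hk. f_equal; ring.
Qed.

Lemma exp_automorphism_fixes_Q (alpha : C -> C) (q : Q) :
  exp_automorphism alpha -> alpha (RtoC (Q2R q)) = RtoC (Q2R q).
Proof.
  intros [alpha_add alpha_exp].
  assert (alpha_1 : alpha 1%C = 1%C).
  { pose proof (alpha_exp 0%C) as H.
    rewrite (additive_0 alpha alpha_add), Cexp_RtoC, exp_0 in H. exact H. }
  rewrite <- (Cmult_1_r (Q2R q)), (additive_Qmul alpha alpha_add), alpha_1.
  reflexivity.
Qed.

Theorem mainTheorem2 (alpha : C -> C) (Halpha : exp_automorphism alpha)
  (t : Q) (ht : (0 < t)%Q) :
  exists n : Z,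
    alpha (RtoC (ln (Q2R t))) = Cplus (RtoC (ln (Q2R t))) ((0, 2 * PI * IZR n) : C).
Proof.
  assert (t_pos : 0 < Q2R t).
  { apply Qreals.Qlt_Rlt in ht. unfold Q2R in ht at 1; simpl in ht. lra. }
  apply Cexp_eq_pos_real; [exact t_pos |].
  rewrite <- (proj2 Halpha), Cexp_RtoC, exp_ln by exact t_pos.
  apply exp_automorphism_fixes_Q, Halpha.
Qed.
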